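(* (a) For every integer $n\ge 2$, $\chi(H_2(n,2))=2^{n-1}$. (b) Let $q\ge 3$ and $n\ge 2$ be integers and let $d$ be an integer with $d>0$ and $d\in\{n-q+2,\ldots,n\}$. Then $\chi(H_q(n,d))=q^{n-d+1}$, and every proper $q^{n-d+1}$-coloring of $H_q(n,d)$ is even.
   Context: $\mathbb{Z}_q=\mathbb{Z}/q\mathbb{Z}$; for $x,y\in\mathbb{Z}_q^n$, $\mathrm{d}(x,y)=|\{i: x_i\neq y_i\}|$ is the Hamming distance. $H_q(n,d)$ is the simple undirected graph with vertex set $\mathbb{Z}_q^n$ in which $x,y$ are adjacent iff $\mathrm{d}(x,y)\ge d$. $\chi$ denotes the chromatic number. A coloring is called even if all its color classes (sets of vertices with the same color) have the same cardinality. *)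

From mathcomp Require Import all_boot.
Set Implicit Arguments. Unset Strict Implicit. Unset Printing Implicit Defensive.

Definition word (q n : nat) := {ffun 'I_n -> 'I_q}.

Definition hdist (q n : nat) (x y : word q n) : nat := #|[set i | x i != y i]|.

(* adjacency in H_q(n,d): x,y adjacent iff d(x,y) >= d (simple graph: d>0 excludes loops) *)
Definition hadj (q n d : nat) (x y : word q n) : bool := (d <= hdist x y) && (x != y).

Definition proper_coloring (q n d k : nat) (f : word q n -> 'I_k) : Prop :=
  forall x y : word q n, hadj d x y -> f x <> f y.

Definition chi_is (q n d m : nat) : Prop :=
  (exists f : word q n -> 'I_m, proper_coloring d f) /\
  (forall k, k < m -> forall f : word q n -> 'I_k, ~ proper_coloring d f).

Definition even_coloring (q n k : nat) (f : word q n -> 'I_k) : Prop :=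
  forall c1 c2 : 'I_k, #|[set x | f x == c1]| = #|[set x | f x == c2]|.

(* Colouring a word by its first n - d + 1 letters is proper, since two words with the
   same prefix are at distance < d.  Conversely a colour class is a family of words
   pairwise agreeing in at least t = n - d + 1 coordinates.  For q = 2 and d = 2 such a
   class has at most two words, because words at distance 1 have digit sums of different
   parity.  For t < q such a family F has at most q^(n-t) words, by Delsarte's linear
   programming bound: with P_S the projections onto the character spaces of Z_q^n
   (S a set of coordinates) there are weights nu(|S|) >= 0 with nu(0) = q^t such that
   sum_S nu(|S|) P_S agrees with the identity on pairs agreeing in t coordinates, whence
   q^t |F|^2 / q^n = nu(0) 1_F' P_0 1_F <= sum_S nu(|S|) 1_F' P_S 1_F = |F|.
   So at least q^t colours are needed, and with exactly q^t colours every class has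
   exactly q^(n-t) elements. *)

From mathcomp Require Import all_boot all_order all_algebra.
From mathcomp Require Import zify ring.
Import GRing.Theory Num.Theory Order.TTheory.

Set Implicit Arguments.
Unset Strict Implicit.
Unset Printing Implicit Defensive.

Definition agree q n (x y : word q n) : {set 'I_n} := [set i | x i == y i].

Lemma card_agree_hdist q n (x y : word q n) : #|agree x y| + hdist x y = n.
Proof.
rewrite /hdist -[RHS](card_ord n) -(cardsC (agree x y)); congr (_ + _).
by apply: eq_card => i; rewrite !inE.
Qed.

Lemma hdist_eq0 q n (x y : word q n) : (hdist x y == 0) = (x == y).
Proof.
rewrite /hdist cards_eq0; apply/eqP/eqP => [/setP eq_xy | ->].
  by apply/ffunP => i; move: (eq_xy i); rewrite !inE => /negbFE/eqP.
by apply/setP => i; rewrite !inE eqxx.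
Qed.

Lemma card_word q n : #|word q n| = q ^ n.
Proof. by rewrite card_ffun !card_ord. Qed.

Lemma leq_binS_mul m s : (s <= m)%N -> ('C(m.+1, s) <= s.+1 * 'C(m, s))%N.
Proof.
case: s => [|s] le_sm; first by rewrite !bin0.
by rewrite binS mulSn leq_add2l mul_bin_left leq_pmull // subn_gt0.
Qed.

Local Open Scope ring_scope.

Section BinomialHead.
Variables (R : comPzRingType) (x : R) (s : nat).

Definition binom_head (w : nat) : R := \sum_(k < s.+1) 'C(w, k)%:R * x ^+ k.

Definition binom_tail (w : nat) : R := (1 + x) ^+ w - binom_head w.

Lemma binom_head0 : binom_head 0 = 1.
Proof.
rewrite /binom_head big_ord_recl big1 => [|i _]; first by rewrite bin0 mulr1 addr0.
by rewrite bin0n mul0r.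
Qed.

Lemma binom_headS w :
  binom_head w.+1 = (1 + x) * binom_head w - 'C(w, s)%:R * x ^+ s.+1.
Proof.
have headl : binom_head w = 1 + \sum_(k < s) 'C(w, k.+1)%:R * x ^+ k.+1.
  by rewrite /binom_head big_ord_recl /= bin0 expr0 mulr1.
have headr : binom_head w = \sum_(k < s) 'C(w, k)%:R * x ^+ k + 'C(w, s)%:R * x ^+ s.
  by rewrite /binom_head big_ord_recr.
rewrite [LHS]/binom_head big_ord_recl /= bin0 expr0 mulr1.
under eq_bigr => k _ do rewrite /bump /= binS natrD mulrDl.
rewrite big_split /=.
have -> : \sum_(k < s) 'C(w, k)%:R * x ^+ k.+1 = x * (binom_head w - 'C(w, s)%:R * x ^+ s).
  by rewrite headr addrK mulr_sumr; apply: eq_bigr => k _; rewrite exprS; ring.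
have -> : \sum_(k < s) 'C(w, k.+1)%:R * x ^+ k.+1 = binom_head w - 1 by rewrite headl; ring.
by rewrite exprS; ring.
Qed.

Lemma binom_tail0 : binom_tail 0 = 0.
Proof. by rewrite /binom_tail binom_head0 subrr. Qed.

Lemma binom_tailS w : binom_tail w.+1 = (1 + x) * binom_tail w + 'C(w, s)%:R * x ^+ s.+1.
Proof. by rewrite /binom_tail binom_headS exprS; ring. Qed.

End BinomialHead.

Section AlternatingTail.
Variables (R : realDomainType) (a : R) (s : nat).
Hypothesis a_ge : s.+2%:R <= a.

Let V w := (-1) ^+ w * binom_tail (- a) s w.

Lemma alt_tailS w : V w.+1 = (a - 1) * V w + (-1) ^+ (w + s) * 'C(w, s)%:R * a ^+ s.+1.
Proof. by rewrite /V binom_tailS exprD !exprS (exprNn a); ring. Qed.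

Lemma alt_tail_small w : (w <= s)%N -> V w = 0.
Proof.
elim: w => [|w IH] le_ws; first by rewrite /V binom_tail0 mulr0.
by rewrite alt_tailS IH ?(ltnW le_ws) // bin_small // mulr0n !(mulr0, mul0r) addr0.
Qed.

(* The terms of the recurrence alternate in sign; pairing each negative term with the
   preceding positive one keeps the sum nonnegative because [a - 1 >= s + 1]. *)
Lemma alt_tail_lower u :
  0 <= V (s.+1 + u) /\ (~~ odd u -> 'C(s + u, s)%:R * a ^+ s.+1 <= V (s.+1 + u)).
Proof.
have a1_ge : s.+1%:R <= a - 1 by rewrite lerBrDr natr1.
have a1_ge0 : 0 <= a - 1 by apply: le_trans a1_ge.
have apow_ge0 : 0 <= a ^+ s.+1 by rewrite exprn_ge0 // (le_trans _ a_ge).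
elim: u => [|u [V_ge0 V_ge]].
  rewrite !addn0 alt_tailS alt_tail_small // mulr0 add0r binn mulr1 -signr_odd addnn odd_double.
  by rewrite expr0 !mul1r.
have sign_odd : odd (s.+1 + u + s) = ~~ odd u.
  by rewrite !oddD /=; case: (odd s); case: (odd u).
have -> : (s + u.+1 = s.+1 + u)%N by rewrite addnS.
rewrite addnS alt_tailS -signr_odd sign_odd /=.
case: (odd u) V_ge => /= [_ | V_ge].
  rewrite expr0 mul1r; split => [|_]; last by rewrite lerDr mulr_ge0.
  by apply: addr_ge0; apply: mulr_ge0.
rewrite expr1 mulN1r mulNr subr_ge0; split => //.
apply: le_trans (ler_wpM2l a1_ge0 (V_ge isT)).
rewrite mulrA ler_wpM2r //.
apply: le_trans (ler_wpM2r (ler0n _ _) a1_ge).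
by rewrite -natrM ler_nat addSn leq_binS_mul // leq_addr.
Qed.

Lemma alt_tail_ge0 w : 0 <= V w.
Proof.
case: (leqP w s) => [le_ws | lt_sw]; first by rewrite alt_tail_small.
by rewrite -(subnKC lt_sw); case: (alt_tail_lower (w - s.+1)).
Qed.

End AlternatingTail.

Lemma sum_delta_mulr (R : pzSemiRingType) (T : finType) (a : T) (F : T -> R) :
  \sum_c (c == a)%:R * F c = F a.
Proof.
under eq_bigr => c _ do rewrite mulr_natl mulrb.
by rewrite -big_mkcond big_pred1_eq.
Qed.

Lemma sum_supersets_prod (R : comPzSemiRingType) (I : finType) (K : {set I}) (a b : I -> R) :
  \sum_(S : {set I} | K \subset S) \prod_i (if i \in S then a i else b i) =
  \prod_i (if i \in K then a i else a i + b i).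
Proof.
transitivity (\prod_i (a i + (if i \in K then 0 else b i))).
  rewrite bigA_distr big_mkcond; apply: eq_bigr => S _.
  case: (boolP (K \subset S)) => [/subsetP sub_KS | /subsetPn [i iK iNS]].
    by apply: eq_bigr => i _; case: (boolP (i \in K)) => [/sub_KS -> | _].
  by rewrite (bigD1 i) //= (negbTE iNS) iK mul0r.
by apply: eq_bigr => i _; case: (i \in K); rewrite ?addr0.
Qed.

Lemma prod_if_scale (R : comPzSemiRingType) (I : finType) (S : {set I}) (c : R) (a b : I -> R) :
  \prod_i (if i \in S then c * a i else b i) =
  c ^+ #|S| * \prod_i (if i \in S then a i else b i).
Proof.
transitivity (\prod_i ((if i \in S then c else 1) * (if i \in S then a i else b i))).
  by apply: eq_bigr => i _; case: (i \in S); rewrite ?mul1r.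
by rewrite big_split /= -big_mkcond prodr_const.
Qed.

Section HammingProjections.
Variables (R : realFieldType) (q n : nat).
Hypothesis q_gt1 : (1 < q)%N.

Definition centered_eq (a b : 'I_q) : R := (a == b)%:R - q%:R^-1.

(* [hproj S] is the orthogonal projection of R^(Z_q^n) onto the span of the characters of
   Z_q^n whose support is exactly [S]. *)
Definition hproj (S : {set 'I_n}) (x y : word q n) : R :=
  \prod_i (if i \in S then centered_eq (x i) (y i) else q%:R^-1).

Let q_neq0 : q%:R != 0 :> R. Proof. by rewrite pnatr_eq0 -lt0n ltnW. Qed.

Lemma centered_eqC a b : centered_eq a b = centered_eq b a.
Proof. by rewrite /centered_eq eq_sym. Qed.

Lemma sum_centered_eq b : \sum_c centered_eq c b = 0.
Proof.
under eq_bigr => c _ do rewrite /centered_eq -[(c == b)%:R]mulr1.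
by rewrite sumrB sum_delta_mulr sumr_const card_ord -[_ *+ q]mulr_natr mulVf ?subrr.
Qed.

Lemma centered_eq_idem a b : \sum_c centered_eq a c * centered_eq c b = centered_eq a b.
Proof.
under eq_bigr => c _ do rewrite {1}/centered_eq mulrBl eq_sym.
by rewrite sumrB sum_delta_mulr -mulr_sumr sum_centered_eq mulr0 subr0.
Qed.

Lemma sum_hproj x y : \sum_S hproj S x y = (x == y)%:R.
Proof.
rewrite /hproj -bigA_distr /=; under eq_bigr => i _ do rewrite /centered_eq subrK.
have [<- | neq_xy] := eqVneq x y; first by rewrite big1 // => i _; rewrite eqxx.
have /set0Pn [i] : [set i | x i != y i] != set0 by rewrite -cards_eq0 hdist_eq0.
by rewrite inE => /negbTE neq_i; rewrite (bigD1 i) //= neq_i mul0r.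
Qed.

Lemma hprojC S x y : hproj S x y = hproj S y x.
Proof. by apply: eq_bigr => i _; rewrite centered_eqC. Qed.

Lemma hproj_idem S x y : \sum_z hproj S x z * hproj S z y = hproj S x y.
Proof.
under eq_bigr => z _ do rewrite -big_split /=.
rewrite -(bigA_distr_bigA (fun i c => (if i \in S then centered_eq (x i) c else q%:R^-1) *
                                      (if i \in S then centered_eq c (y i) else q%:R^-1))) /=.
apply: eq_bigr => i _; case: (i \in S); first exact: centered_eq_idem.
by rewrite sumr_const card_ord -[_ *+ q]mulr_natr divfK.
Qed.

Lemma hproj0 x y : hproj set0 x y = q%:R ^- n.
Proof.
by rewrite /hproj (eq_bigr (fun=> q%:R^-1)) ?prodr_const ?card_ord ?exprVn // => i _; rewrite inE.
Qed.

Definition hform (F : {set word q n}) (S : {set 'I_n}) : R :=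
  \sum_(x in F) \sum_(y in F) hproj S x y.

Lemma hform_ge0 F S : 0 <= hform F S.
Proof.
have -> : hform F S = \sum_z (\sum_(x in F) hproj S x z) ^+ 2.
  transitivity (\sum_(x in F) \sum_(y in F) \sum_z hproj S x z * hproj S z y).
    by apply: eq_bigr => x _; apply: eq_bigr => y _; rewrite hproj_idem.
  under eq_bigr => x _ do rewrite exchange_big.
  rewrite exchange_big; apply: eq_bigr => z _.
  rewrite expr2 mulr_suml; apply: eq_bigr => x _.
  by rewrite mulr_sumr; apply: eq_bigr => y _; rewrite (hprojC S z y).
by apply: sumr_ge0 => z _; apply: sqr_ge0.
Qed.

Lemma sum_weighted_hform (F : {set word q n}) (c : {set 'I_n} -> R) :
    {in F &, forall x y, \sum_S c S * hproj S x y = (x == y)%:R} ->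
  \sum_S c S * hform F S = #|F|%:R.
Proof.
move=> c_diag.
transitivity (\sum_S \sum_(x in F) \sum_(y in F) c S * hproj S x y).
  by apply: eq_bigr => S _; rewrite mulr_sumr; apply: eq_bigr => x _; rewrite mulr_sumr.
rewrite exchange_big -sumr_const; apply: eq_bigr => x xF.
rewrite exchange_big (bigD1 x) //= c_diag // eqxx big1 ?addr0 // => y /andP [yF neq_yx].
by rewrite c_diag // eq_sym (negbTE neq_yx).
Qed.

Lemma hform0 F : hform F set0 = #|F|%:R ^+ 2 / q%:R ^+ n.
Proof.
rewrite /hform; under eq_bigr => x _ do under eq_bigr => y _ do rewrite hproj0.
by rewrite !sumr_const -mulrnA -[_ *+ (_ * _)]mulr_natl natrM expr2.
Qed.

Let r : R := - (q%:R - 1)^-1.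

Let q1_neq0 : q%:R - 1 != 0 :> R.
Proof. by rewrite subr_eq0 pnatr_eq1 gtn_eqF. Qed.

(* Counting C(|S|,k) as the k-subsets K of S turns the sum into products over K, each
   containing the factor [r * centered_eq (x i) (y i) + q^-1], which vanishes at any
   coordinate i outside K where x and y agree. *)
Lemma sum_hproj_binom k (x y : word q n) : (k < #|agree x y|)%N ->
  \sum_(S : {set 'I_n}) r ^+ #|S| * 'C(#|S|, k)%:R * hproj S x y = 0.
Proof.
move=> lt_k_agree.
pose P (S : {set 'I_n}) := \prod_i (if i \in S then r * centered_eq (x i) (y i) else q%:R^-1).
transitivity (\sum_(S : {set 'I_n}) \sum_(K : {set 'I_n} | (K \subset S) && (#|K| == k)) P S).
  apply: eq_bigr => S _; rewrite mulrAC -prod_if_scale -cards_draws -sum1dep_card.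
  by rewrite natr_sum mulr_sumr; apply: eq_bigr => K _; rewrite mulr1.
rewrite (exchange_big_dep (fun K : {set 'I_n} => #|K| == k)) /=; last by move=> S K _ /andP [].
apply: big1 => K /eqP card_K.
under eq_bigl => S do rewrite card_K eqxx andbT.
rewrite sum_supersets_prod.
have [i iA iNK] : exists2 i, i \in agree x y & i \notin K.
  apply/subsetPn; apply: contraTN lt_k_agree => /subset_leq_card.
  by rewrite card_K -leqNgt.
rewrite (bigD1 i) //= (negbTE iNK).
have -> : r * centered_eq (x i) (y i) + q%:R^-1 = 0.
  by move: iA; rewrite inE /centered_eq /r => /eqP ->; rewrite eqxx mulr1n; field; rewrite q_neq0.
by rewrite mul0r.
Qed.

(* The weights nu of Delsarte's bound for t = s + 1: [hweight s w - 1] is the combination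
   [\sum_(k <= s) ((-1)^k q^(s+1) - (-q)^k) r^w C(w,k)], so by [sum_hproj_binom] it is
   invisible on pairs of words agreeing in more than s coordinates. *)
Definition hweight (s w : nat) : R :=
  1 + r ^+ w * (q%:R ^+ s.+1 * binom_head (-1) s w - binom_head (- q%:R) s w).

Lemma sum_hweight_hproj s (x y : word q n) : (s < #|agree x y|)%N ->
  \sum_(S : {set 'I_n}) hweight s #|S| * hproj S x y = (x == y)%:R.
Proof.
move=> lt_s_agree.
under eq_bigr => S _ do rewrite /hweight /binom_head mulr_sumr -sumrB mulr_sumr mulrDl mul1r.
rewrite big_split /= sum_hproj -[RHS]addr0; congr (_ + _).
under eq_bigr => S _ do rewrite mulr_suml.
rewrite exchange_big /=; apply: big1 => k _.
transitivity (((-1) ^+ k * q%:R ^+ s.+1 - (- q%:R) ^+ k) *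
  \sum_(S : {set 'I_n}) r ^+ #|S| * 'C(#|S|, k)%:R * hproj S x y).
  rewrite mulr_sumr; apply: eq_bigr => S _.
  by move: (r ^+ _) ('C(_, _)%:R) (hproj _ _ _) => a c h; ring.
by rewrite sum_hproj_binom ?mulr0 // (leq_ltn_trans (leq_ord k) lt_s_agree).
Qed.

Lemma hweight0 s : hweight s 0 = q%:R ^+ s.+1.
Proof. by rewrite /hweight !binom_head0 expr0 mul1r mulr1 addrC subrK. Qed.

Lemma hweightS s w :
  hweight s w.+1 = (-1) ^+ w * binom_tail (- q%:R) s w / (q%:R - 1) ^+ w.
Proof.
rewrite /hweight /binom_tail !binom_headS /r.
move: (binom_head _ _ w) (binom_head _ _ w) ('C(w, s)%:R) => H1 H2 c.
have [a a_neq0 ->] : exists2 a : R, a != 0 & q%:R = a + 1 by exists (q%:R - 1); rewrite ?subrK.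
have -> : 1 + - (a + 1) = - a by ring.
rewrite addrK (exprNn a^-1) (exprNn (a + 1)) (exprNn a) exprVn !exprS -signr_odd.
have aw_neq0 : a ^+ w != 0 by rewrite expf_neq0.
by case: (odd w); rewrite /= ?expr0 ?expr1; field; rewrite aw_neq0 a_neq0.
Qed.

Lemma hweight_ge0 s w : (s.+1 < q)%N -> 0 <= hweight s w.
Proof.
move=> lt_sq; case: w => [|w]; first by rewrite hweight0 exprn_ge0 ?ler0n.
rewrite hweightS divr_ge0 //.
  by apply: alt_tail_ge0; rewrite ler_nat.
by rewrite exprn_ge0 // subr_ge0 ler1n ltnW.
Qed.

End HammingProjections.

Lemma card_agreeing_family q n s (F : {set word q n}) : (s.+1 < q)%N ->
  {in F &, forall x y, s < #|agree x y|}%N -> (#|F| * q ^ s.+1 <= q ^ n)%N.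
Proof.
move=> lt_sq agreeF; have q_gt1 : (1 < q)%N by apply: leq_trans lt_sq.
pose c (S : {set 'I_n}) := hweight rat q s #|S|.
have weighted_sum : \sum_S c S * hform rat F S = #|F|%:R.
  apply: sum_weighted_hform => x y xF yF.
  exact: (sum_hweight_hproj rat q_gt1 (agreeF x y xF yF)).
have lower : c set0 * hform rat F set0 <= #|F|%:R.
  rewrite -weighted_sum (bigD1 set0) //= lerDl; apply: sumr_ge0 => S _.
  by rewrite mulr_ge0 ?hweight_ge0 ?hform_ge0.
move: lower; rewrite /c cards0 hweight0 hform0 //.
rewrite mulrA ler_pdivrMr ?exprn_gt0 ?ltr0n ?(ltnW q_gt1) //.
rewrite -!natrX -!natrM ler_nat.
case: (posnP #|F|) => [-> // | F_gt0].
move: (q ^ s.+1)%N (q ^ n)%N => a b; rewrite expnS expn1; nia.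
Qed.

Local Close Scope ring_scope.

Section ColorClasses.
Variables (T : finType) (k : nat) (f : T -> 'I_k).

Lemma sum_card_color_classes : \sum_c #|[set x | f x == c]| = #|T|.
Proof.
rewrite -sum1_card (partition_big f xpredT) //=; apply: eq_bigr => c _.
by rewrite sum1dep_card.
Qed.

Lemma colors_ge m : 0 < #|T| ->
  (forall c : 'I_k, #|[set x | f x == c]| * m <= #|T|) -> m <= k.
Proof.
move=> T_gt0 class_small; rewrite -(leq_pmul2l T_gt0) [X in _ <= X]mulnC.
apply: leq_trans (_ : \sum_(c : 'I_k) #|T| <= _); last by rewrite sum_nat_const card_ord.
by rewrite -{1}sum_card_color_classes (big_distrl (times := muln)) leq_sum.
Qed.

Lemma color_classes_eq : (forall c : 'I_k, #|[set x | f x == c]| * k <= #|T|) ->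
  forall c : 'I_k, #|[set x | f x == c]| * k = #|T|.
Proof.
move=> class_small c.
have total : \sum_c' #|[set x | f x == c']| * k = \sum_(c' : 'I_k) #|T|.
  by rewrite -big_distrl /= sum_card_color_classes sum_nat_const card_ord mulnC.
move: total; rewrite (bigD1 c) //= [in RHS](bigD1 c) //=.
set A := \sum_(i < k | i != c) _; set B := \sum_(i < k | i != c) _.
have le_AB : A <= B by apply: leq_sum => c' _; apply: class_small.
move=> sum_eq; apply/eqP; rewrite eqn_leq class_small /=.
by rewrite -(leq_add2r A) sum_eq leq_add2l.
Qed.

End ColorClasses.

Lemma prefix_coloring q n m d : m <= n -> n < m + d ->
  exists f : word q n -> 'I_(q ^ m), proper_coloring d f.
Proof.
move=> le_mn lt_n_md.
pose prefix (x : word q n) : {ffun 'I_m -> 'I_q} := [ffun i => x (widen_ord le_mn i)].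
have card_prefixes : #|{ffun 'I_m -> 'I_q}| = q ^ m by rewrite card_ffun !card_ord.
exists (fun x => cast_ord card_prefixes (enum_rank (prefix x))).
move=> x y /andP [le_d_dist _] /cast_ord_inj /enum_rank_inj same_prefix.
have : [set widen_ord le_mn i | i : 'I_m] \subset agree x y.
  apply/subsetP => _ /imsetP [i _ ->]; rewrite inE.
  by have := congr1 (fun g : {ffun 'I_m -> 'I_q} => g i) same_prefix; rewrite /= !ffunE => ->.
move/subset_leq_card; rewrite card_imset ?card_ord; last by move=> i j /(congr1 val) /= /val_inj.
by have := card_agree_hdist x y; move: #|agree x y| (hdist x y) le_d_dist => a h; lia.
Qed.

Lemma hdist_color_class q n d k (f : word q n -> 'I_k) x y :
  proper_coloring d f -> 0 < d -> f x = f y -> hdist x y < d.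
Proof.
move=> f_proper d_gt0 same_color; have [<- | neq_xy] := eqVneq x y.
  by move: (hdist_eq0 x x); rewrite eqxx => /eqP ->.
by rewrite ltnNge; apply: contraPN same_color => le_d_dist; apply: f_proper; apply/andP.
Qed.

Lemma card_color_class q n d k (f : word q n -> 'I_k) c :
  proper_coloring d f -> 0 < d <= n -> n + 2 <= q + d ->
  #|[set x | f x == c]| * q ^ (n - d + 1) <= q ^ n.
Proof.
move=> f_proper /andP [d_gt0 le_dn] le_n2_qd; rewrite addn1.
apply: card_agreeing_family; first lia.
move=> x y; rewrite !inE => /eqP fx /eqP fy.
have := hdist_color_class f_proper d_gt0 (etrans fx (esym fy)).
by have := card_agree_hdist x y; lia.
Qed.

Lemma odd_sum_word2 n (x y : word 2 n) :
  odd (\sum_i x i) (+) odd (\sum_i y i) = odd (hdist x y).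
Proof.
have add_bit (a b : 'I_2) : a + b = (a != b) + 2 * (a * b).
  by case: a => [[|[|]]] //; case: b => [[|[|]]].
rewrite -oddD -big_split /= (eq_bigr _ (fun i _ => add_bit (x i) (y i))) big_split /=.
rewrite -big_distrr /= oddD mul2n odd_double addbF /hdist -sum1dep_card [in RHS]big_mkcond.
by congr odd; apply: eq_bigr => i _; case: (x i != y i).
Qed.

Lemma card_word2_close n (C : {set word 2 n}) :
  {in C &, forall x y, hdist x y <= 1} -> #|C| <= 2.
Proof.
move=> close; pose parity (x : word 2 n) := odd (\sum_i x i).
have parity_inj : {in C &, injective parity}.
  move=> x y xC yC same_parity; apply/eqP; rewrite -hdist_eq0.
  have := odd_sum_word2 x y; rewrite -/(parity x) -/(parity y) same_parity addbb.
  by have := close x y xC yC; case: (hdist x y) => [|[|]].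
by rewrite -(card_in_imset parity_inj) (leq_trans (max_card _)) ?card_bool.
Qed.

Lemma card_color_class2 n k (f : word 2 n -> 'I_k) c :
  proper_coloring 2 f -> #|[set x | f x == c]| <= 2.
Proof.
move=> f_proper; apply: card_word2_close => x y; rewrite !inE => /eqP fx /eqP fy.
by rewrite -ltnS; apply: hdist_color_class f_proper _ (etrans fx (esym fy)).
Qed.

Theorem corollary3p5 :
  (forall n : nat, 2 <= n -> chi_is 2 n 2 (2 ^ n.-1)) /\
  (forall q n d : nat, 3 <= q -> 2 <= n -> 0 < d -> n + 2 <= q + d -> d <= n ->
     chi_is q n d (q ^ (n - d + 1)) /\
     (forall f : word q n -> 'I_(q ^ (n - d + 1)),
        proper_coloring d f -> even_coloring f)).
Proof.
split=> [n n_ge2 | q n d q_ge3 n_ge2 d_gt0 le_n2_qd le_dn].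
  split=> [|k lt_k f f_proper]; first by apply: prefix_coloring; lia.
  suff : 2 ^ n.-1 <= k by rewrite leqNgt lt_k.
  apply: (colors_ge (f := f)) => [|c]; first by rewrite card_word expn_gt0.
  rewrite card_word -[in X in _ <= X](prednK (ltnW n_ge2)) expnS leq_mul2r.
  by rewrite card_color_class2 ?orbT.
have class_le k (f : word q n -> 'I_k) c : proper_coloring d f ->
    #|[set x | f x == c]| * q ^ (n - d + 1) <= #|word q n|.
  by move=> f_proper; rewrite card_word card_color_class ?d_gt0.
split; first split.
- by apply: prefix_coloring; lia.
- move=> k lt_k f f_proper; suff : q ^ (n - d + 1) <= k by rewrite leqNgt lt_k.
  by apply: (colors_ge (f := f)) => [|c]; rewrite ?class_le // card_word expn_gt0; lia.
- move=> f f_proper c1 c2; apply/eqP.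
  rewrite -(eqn_pmul2r (_ : 0 < q ^ (n - d + 1))) ?expn_gt0 ?(ltnW (ltnW q_ge3)) //.
  by rewrite !(color_classes_eq (fun c => class_le _ f c f_proper)).
Qed.
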